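(* There exists a probability density $f$ supported on $[0,\infty)$ such that $f\in\mathcal{L}_0\setminus\mathcal{S}_0$ and $f$ is not almost decreasing.
   Context: For a probability density $f$ on $[0,\infty)$: $f\in\mathcal{L}_0$ (long-tailed density) if $f(x)>0$ for all sufficiently large $x$ and for every constant $t\in\mathbb{R}$, $f(x+t)\sim f(x)$ as $x\to\infty$ (where $a(x)\sim b(x)$ means $a(x)/b(x)\to1$). $f\in\mathcal{S}_0$ (subexponential density) if $f\in\mathcal{L}_0$ and $\int_0^x f(x-y)f(y)\,dy\sim 2f(x)$ as $x\to\infty$. The density $f$ is called almost decreasing if there exists a constant $x_0\ge 0$ such that $f(x)>0$ for all $x\ge x_0$ and $\sup_{x_0\le x\le y<\infty} f(y)/f(x)<\infty$. *)

From HB Require Import structures.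
From mathcomp Require Import all_boot all_order all_algebra.
From mathcomp Require Import all_classical all_reals all_analysis.
Set Implicit Arguments. Unset Strict Implicit. Unset Printing Implicit Defensive.
Import Order.TTheory GRing.Theory Num.Theory.
Import numFieldNormedType.Exports.
Local Open Scope classical_set_scope.
Local Open Scope ring_scope.

Section Defs.
Variable R : realType.

Definition density_on_nonneg (f : R -> R) : Prop :=
  measurable_fun setT f /\
  (forall x, 0 <= f x) /\
  (forall x, x < 0 -> f x = 0) /\
  (\int[@lebesgue_measure R]_(x in `[0%R, +oo[%classic) (f x)%:E = 1)%E.

Definition asym_equiv (a b : R -> R) : Prop :=
  (a x / b x) @[x --> +oo] --> (1 : R).

Definition long_tailed (f : R -> R) : Prop :=
  (exists x0 : R, forall x, x0 <= x -> 0 < f x) /\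
  (forall t : R, asym_equiv (fun x => f (x + t)) f).

Definition conv0 (f : R -> R) (x : R) : \bar R :=
  (\int[@lebesgue_measure R]_(y in `[0%R, x]%classic) (f (x - y) * f y)%:E)%E.

Definition subexponential (f : R -> R) : Prop :=
  long_tailed f /\
  (\forall x \near +oo, conv0 f x \is a fin_num) /\
  asym_equiv (fun x => fine (conv0 f x)) (fun x => 2 * f x).

Definition almost_decreasing (f : R -> R) : Prop :=
  exists x0 : R, 0 <= x0 /\ (forall x, x0 <= x -> 0 < f x) /\
    exists M : R, forall x y, x0 <= x -> x <= y -> f y / f x <= M.

End Defs.

(* The density is f(x) ~ (1 + x)^(-a(x)) on [0, +oo), whose tail index
   a(x) = 2 + 2 max(0, sin (kappa ln (1 + x))) oscillates between 2 and 4 on a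
   logarithmic scale.  Since a varies so slowly, ln f (x + t) - ln f x is
   O(|t| ln x / x), which tends to 0: f is long-tailed.  With rho = ln (3/2),
   kappa = pi / (2 rho) and q = exp (4 k rho), the index is 2 on the window
   1 + x in [4q/9, q] and 4 at the peak 1 + x = 3q/2.  As 9q/4 is the left end of
   the next window, f (9q/4 - 1) / f (3q/2 - 1) = q^2 is unbounded: f is not
   almost decreasing.
   At the peak x = 3q/2 - 1, the y for which both y + 1 and x - y + 1 lie in the
   window contribute at least a multiple of q (q^-2)^2 = q^-3 to the convolution
   integral, whereas f x is of order q^-4: f is not subexponential. *)

From HB Require Import structures.
From mathcomp Require Import all_boot all_order all_algebra.
From mathcomp Require Import all_classical all_reals all_analysis.
From mathcomp Require Import ring lra measurable_realfun.
Set Implicit Arguments. Unset Strict Implicit. Unset Printing Implicit Defensive.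
Import Order.TTheory GRing.Theory Num.Theory.
Import numFieldNormedType.Exports.
Local Open Scope classical_set_scope.
Local Open Scope ring_scope.

Section RealFacts.
Variable R : realType.
Implicit Types a b u v y : R.

Lemma dist_sin_le a b : `|sin a - sin b| <= `|a - b|.
Proof.
wlog ab : a b / a <= b.
  move=> H; have [|/ltW] := leP a b; first exact: H.
  by rewrite distrC (distrC a); exact: H.
move: ab; rewrite le_eqVlt => /predU1P[->|ab]; first by rewrite !subrr normr0.
have [c _ sinBE] := @MVT R sin cos a b ab (fun x _ => is_derive_sin x)
  (continuous_subspaceT (fun x => @continuous_sin R x)).
by rewrite distrC sinBE normrM distrC ler_piMl// cos_max.
Qed.

Lemma dist_max0_le u v : `|Num.max 0 u - Num.max 0 v| <= `|u - v|.
Proof.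
have := ler_norm (u - v); have := ler_norm (v - u); rewrite distrC => uv vu.
rewrite ler_norml.
by have [u0|u0] := leP u 0; have [v0|v0] := leP v 0;
  rewrite ?(max_l u0) ?(max_l v0) ?(max_r (ltW u0)) ?(max_r (ltW v0));
  apply/andP; split; lra.
Qed.

Lemma lnB_le a b : 0 < a -> 0 < b -> ln a - ln b <= (a - b) / b.
Proof.
move=> a0 b0; rewrite -ln_div ?posrE//.
have -> : a / b = 1 + (a - b) / b by field; rewrite gt_eqF.
apply: le_ln1Dx; have : 0 < a / b by exact: divr_gt0.
rewrite mulrBl divff ?gt_eqF//; lra.
Qed.

Lemma dist_ln_le a b : 0 < a -> 0 < b -> `|ln a - ln b| <= `|a - b| / Num.min a b.
Proof.
move=> a0 b0; have ab0 : 0 < Num.min a b by rewrite lt_min a0.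
have divr_le_min c : 0 < c -> Num.min a b <= c ->
    `|a - b| / c <= `|a - b| / Num.min a b.
  by move=> c0 abc; rewrite ler_wpM2l// lef_pV2.
rewrite ler_norml lerNl opprB; apply/andP; split.
- apply: le_trans (lnB_le b0 a0) (le_trans _ (divr_le_min _ a0 _)).
    by rewrite ler_pM2r ?invr_gt0// distrC ler_norm.
  by rewrite ge_min lexx.
- apply: le_trans (lnB_le a0 b0) (le_trans _ (divr_le_min _ b0 _)).
    by rewrite ler_pM2r ?invr_gt0// ler_norm.
  by rewrite ge_min lexx orbT.
Qed.

Lemma ln_le_2sqrt y : 0 < y -> ln y <= 2 * Num.sqrt y.
Proof.
move=> y0; have r0 : 0 < Num.sqrt y by rewrite sqrtr_gt0.
rewrite -{1}(sqr_sqrtr (ltW y0)) lnXn// mulr2n.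
have := ln_sublinear r0; lra.
Qed.

Lemma integral_ge_itv_cst (D : set R) (f : R -> R) (a b m : R) :
  measurable D -> measurable_fun D f -> (forall x, D x -> 0 <= f x) ->
  `[a, b] `<=` D -> a < b -> 0 <= m -> (forall x, a <= x <= b -> m <= f x) ->
  (((b - a) * m)%:E <= \int[@lebesgue_measure R]_(x in D) (f x)%:E)%E.
Proof.
move=> mD mf f0 abD ab m0 fm.
apply: (@le_trans _ _ (\int[@lebesgue_measure R]_(x in `[a, b]) (f x)%:E)%E).
  apply: (@le_trans _ _ (\int[@lebesgue_measure R]_(x in `[a, b]) (cst m%:E x))%E).
    by rewrite integral_cst//= lebesgue_measure_itv/= lte_fin ab -EFinD -EFinM mulrC.
  apply: ge0_le_integral => //.
  by apply/measurable_EFinP; exact: measurable_funS mD abD mf.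
by apply: ge0_subset_integral => //; exact/measurable_EFinP.
Qed.

Lemma asym_equiv_expR (a b : R -> R) : (a x - b x) @[x --> +oo] --> 0 ->
  asym_equiv (fun x => expR (a x)) (fun x => expR (b x)).
Proof.
move=> ab0; rewrite /asym_equiv -expR0.
under eq_fun do rewrite -expRB.
exact: cvg_comp ab0 (@continuous_expR R 0).
Qed.

Lemma asym_equiv_lt (a b : R -> R) (c : R) : 1 < c ->
  (\forall x \near +oo, 0 < b x) -> asym_equiv a b ->
  \forall x \near +oo, a x < c * b x.
Proof.
move=> c1 b0 ab; near=> x; rewrite -ltr_pdivrMr; last by near: x.
by near: x; exact: cvgr_lt ab _ c1.
Unshelve. all: by end_near. Qed.

End RealFacts.

Section Construction.
Variable R : realType.
Notation mu := (@lebesgue_measure R).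

Definition rho : R := ln (3 / 2).
Definition kappa : R := pi / (2 * rho).
Definition tail_index (u : R) : R := 2 + 2 * Num.max 0 (sin (kappa * u)).
Definition decay (u : R) : R := tail_index u * u.
Definition logp1 (x : R) : R := ln (`|x| + 1).
Definition pre_density (x : R) : R := expR (- decay (logp1 x)).
Definition mass : R := fine (\int[mu]_(x in `[0, +oo[) (pre_density x)%:E).
Definition density (x : R) : R := if 0 <= x then pre_density x / mass else 0.
Definition level (k : nat) : R := expR (4 * k%:R * rho).

Lemma rho_gt0 : 0 < rho.
Proof. by apply: ln_gt0; lra. Qed.

Lemma expR_rho : expR rho = 3 / 2.
Proof. by rewrite lnK// posrE; lra. Qed.

Lemma kappa_gt0 : 0 < kappa.
Proof. by rewrite divr_gt0 ?pi_gt0// mulr_gt0// rho_gt0. Qed.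

Lemma kappa_rho : kappa * rho = pi / 2.
Proof. by rewrite /kappa; field; rewrite gt_eqF// rho_gt0. Qed.

Lemma kappa_period (k : nat) : kappa * (4 * k%:R * rho) = pi *+ 2 *+ k.
Proof.
rewrite -mulrnA -[pi *+ _]mulr_natr natrM.
have -> : kappa * (4 * k%:R * rho) = 4 * k%:R * (kappa * rho) by ring.
by rewrite kappa_rho; field.
Qed.

Lemma tail_index_ge2 u : 2 <= tail_index u.
Proof. by rewrite lerDl mulr_ge0// le_max lexx. Qed.

Lemma tail_index_le4 u : tail_index u <= 4.
Proof.
have : Num.max 0 (sin (kappa * u)) <= 1 by rewrite ge_max ler01 sin_le1.
rewrite /tail_index; lra.
Qed.

Lemma dist_tail_index_le u v :
  `|tail_index u - tail_index v| <= 2 * kappa * `|u - v|.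
Proof.
rewrite /tail_index opprD addrACA subrr add0r -mulrBr normrM ger0_norm//.
rewrite -mulrA ler_pM2l//; apply: le_trans (dist_max0_le _ _) _.
apply: le_trans (dist_sin_le _ _) _.
by rewrite -mulrBr normrM gtr0_norm// kappa_gt0.
Qed.

Lemma tail_index_window (k : nat) u :
  4 * k%:R * rho - 2 * rho <= u <= 4 * k%:R * rho -> tail_index u = 2.
Proof.
move=> /andP[lo hi]; rewrite /tail_index.
have -> : kappa * u = kappa * (u - 4 * k%:R * rho) + pi *+ 2 *+ k.
  by rewrite -kappa_period -mulrDr subrK.
rewrite (periodicn (@sinD2pi R)) max_l ?mulr0 ?addr0//.
rewrite -[kappa * _]opprK sinN oppr_le0.
have k0 := kappa_gt0; have kr := kappa_rho; have pi0 := pi_gt0 R.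
apply: sin_ge0_pi; apply/andP; split; nra.
Qed.

Lemma tail_index_peak (k : nat) : tail_index (4 * k%:R * rho + rho) = 4.
Proof.
rewrite /tail_index mulrDr kappa_period kappa_rho [_ + pi / 2]addrC.
by rewrite (periodicn (@sinD2pi R)) sin_pihalf max_r//; lra.
Qed.

Lemma dist_decay_le u v : 0 <= u ->
  `|decay v - decay u| <= (4 + 2 * kappa * u) * `|v - u|.
Proof.
move=> u0; have -> : decay v - decay u =
    tail_index v * (v - u) + (tail_index v - tail_index u) * u by rewrite /decay; ring.
apply: le_trans (ler_normD _ _) _.
rewrite !normrM (ger0_norm u0) mulrDl lerD//.
  by rewrite ler_wpM2r// ger0_norm ?tail_index_le4// (le_trans _ (tail_index_ge2 v)).
by rewrite mulrAC ler_wpM2r// distrC (distrC v) dist_tail_index_le.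
Qed.

Lemma logp1_ge0 x : 0 <= logp1 x.
Proof. by apply: ln_ge0; rewrite lerDr. Qed.

Lemma logp1E x : 0 <= x -> logp1 x = ln (x + 1).
Proof. by move=> x0; rewrite /logp1 ger0_norm. Qed.

Lemma measurable_logp1 : measurable_fun setT logp1.
Proof.
apply: measurableT_comp; first exact: measurable_ln.
by apply: measurable_funD; [exact: normr_measurable|exact: measurable_cst].
Qed.

Lemma measurable_pre_density : measurable_fun setT pre_density.
Proof.
apply: measurableT_comp; first exact: measurable_expR.
apply: measurableT_comp; first exact: measurable_funN.
apply: measurable_funM; last exact: measurable_logp1.
apply: measurable_funD; first exact: measurable_cst.
apply: measurable_funM; first exact: measurable_cst.
apply: measurable_maxr; first exact: measurable_cst.
apply: measurableT_comp; first by apply: continuous_measurable_fun; exact: continuous_sin.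
by apply: measurable_funM; [exact: measurable_cst|exact: measurable_logp1].
Qed.

Lemma pre_density_gt0 x : 0 < pre_density x.
Proof. exact: expR_gt0. Qed.

Lemma expRN_logp1 (n : nat) x : 0 <= x ->
  expR (- (n%:R * logp1 x)) = ((x + 1) ^+ n)^-1.
Proof. by move=> x0; rewrite logp1E// expRN expRM_natl lnK// posrE ltr_wpDl. Qed.

Lemma pre_density_natE (n : nat) x : 0 <= x -> tail_index (logp1 x) = n%:R ->
  pre_density x = ((x + 1) ^+ n)^-1.
Proof. by rewrite /pre_density /decay => x0 ->; exact: expRN_logp1. Qed.

Lemma pre_density_ge x : 0 <= x -> ((x + 1) ^+ 4)^-1 <= pre_density x.
Proof.
move=> x0; rewrite -(expRN_logp1 4)// ler_expR lerN2.
by rewrite ler_wpM2r ?logp1_ge0 ?tail_index_le4.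
Qed.

Lemma pre_density_le x : 0 <= x -> pre_density x <= ((x + 1) ^+ 2)^-1.
Proof.
move=> x0; rewrite -(expRN_logp1 2)// ler_expR lerN2.
by rewrite ler_wpM2r ?logp1_ge0 ?tail_index_ge2.
Qed.

Lemma level_ge1 (k : nat) : 1 <= level k.
Proof. by rewrite -expR0 ler_expR !mulr_ge0// ltW// rho_gt0. Qed.

Lemma level_S (k : nat) : level k.+1 = 81 / 16 * level k.
Proof.
rewrite /level.
have -> : 4 * k.+1%:R * rho = 4 * k%:R * rho + 4 * rho by rewrite -addn1 natrD; ring.
rewrite expRD mulrC (expRM_natl 4) expR_rho.
by congr (_ * _); rewrite !exprS expr0; field.
Qed.

Lemma exists_level_gt B : exists k, B < level k.
Proof.
have [N _ ltBN] := nbhs_infty_gtr (B / (4 * rho)).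
exists N; apply: lt_le_trans (expR_ge1Dx _); have := ltBN N (leqnn N).
have r0 := rho_gt0; rewrite ltr_pdivrMr ?mulr_gt0//; lra.
Qed.

Lemma pre_density_window (k : nat) z : 0 <= z ->
  4 / 9 * level k <= z + 1 <= level k -> pre_density z = ((z + 1) ^+ 2)^-1.
Proof.
move=> z0 /andP[lo hi]; have z1 : 0 < z + 1 by lra.
have window_lo : 4 / 9 * level k = expR (4 * k%:R * rho - 2 * rho).
  rewrite expRB (expRM_natl 2) expR_rho mulrC; congr (_ * _).
  by rewrite expr2; field.
rewrite (@pre_density_natE 2 z)//.
rewrite logp1E// (@tail_index_window k)//.
by rewrite -[_ <= ln _]ler_expR -[ln _ <= _]ler_expR lnK ?posrE// -window_lo lo hi.
Qed.

Lemma pre_density_peak (k : nat) :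
  pre_density (3 / 2 * level k - 1) = ((3 / 2 * level k) ^+ 4)^-1.
Proof.
have s0 : 0 <= 4 * k%:R * rho + rho by rewrite addr_ge0 ?mulr_ge0// ltW// rho_gt0.
have peakE : 3 / 2 * level k = expR (4 * k%:R * rho + rho).
  by rewrite expRD expR_rho mulrC.
have peak_ge1 : 1 <= 3 / 2 * level k.
  by rewrite peakE (le_trans _ (expR_ge1Dx _))// lerDl.
have peak_ge0 : 0 <= 3 / 2 * level k - 1 by rewrite subr_ge0.
rewrite (@pre_density_natE 4) ?subrK//.
by rewrite logp1E// subrK peakE expRK tail_index_peak.
Qed.

Lemma measurable_EFin_pre_density D : measurable_fun D (fun x => (pre_density x)%:E).
Proof. by apply/measurable_EFinP; exact: measurable_funTS measurable_pre_density. Qed.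

Lemma integral_pre_density_le :
  (\int[mu]_(x in `[0%R, +oo[) (pre_density x)%:E <= (pi / 2)%:E)%E.
Proof.
rewrite -integral0y_oneDsqr; apply: ge0_le_integral => //.
- by move=> x _; rewrite lee_fin ltW// pre_density_gt0.
- exact: measurable_EFin_pre_density.
- apply/measurable_EFinP; apply: measurable_funTS.
  by apply: continuous_measurable_fun; exact: continuous_oneDsqrV.
move=> x /=; rewrite in_itv/= andbT => x0; rewrite lee_fin.
apply: le_trans (pre_density_le x0) _.
rewrite lef_pV2 ?posrE ?exprn_gt0 /oneDsqr; try lra.
exact: lt_le_trans ltr01 (oneDsqr_ge1 x).
Qed.

Lemma integral_pre_density_ge :
  ((16^-1)%:E <= \int[mu]_(x in `[0%R, +oo[) (pre_density x)%:E)%E.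
Proof.
have := @integral_ge_itv_cst _ `[0%R, +oo[ pre_density 0 1 16^-1.
rewrite subr0 mul1r; apply => //.
- exact: measurable_funTS measurable_pre_density.
- by move=> x _; rewrite ltW// pre_density_gt0.
- by move=> x; rewrite /= !in_itv/= andbT => /andP[].
move=> x /andP[x0 x1]; apply: le_trans (pre_density_ge x0).
rewrite lef_pV2 ?posrE ?exprn_gt0; try lra.
have -> : 16 = 2 ^+ 4 :> R by rewrite !exprS expr0; lra.
by rewrite ler_pXn2r// ?nnegrE; lra.
Qed.

Lemma integral_pre_density :
  (\int[mu]_(x in `[0%R, +oo[) (pre_density x)%:E = mass%:E)%E.
Proof.
rewrite /mass fineK//; apply/fin_numPlt/andP; split.
- exact: lt_le_trans (ltNyr _) integral_pre_density_ge.
- exact: le_lt_trans integral_pre_density_le (ltry _).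
Qed.

Lemma mass_gt0 : 0 < mass.
Proof.
have := integral_pre_density_ge; rewrite integral_pre_density lee_fin.
by apply: lt_le_trans; rewrite invr_gt0.
Qed.

Lemma densityE x : 0 <= x -> density x = pre_density x / mass.
Proof. by move=> x0; rewrite /density x0. Qed.

Lemma density_gt0 x : 0 <= x -> 0 < density x.
Proof. by move=> x0; rewrite densityE// divr_gt0 ?pre_density_gt0 ?mass_gt0. Qed.

Lemma density_ge0 x : 0 <= density x.
Proof.
by rewrite /density; case: ifP => // _; rewrite divr_ge0 ?ltW ?pre_density_gt0 ?mass_gt0.
Qed.

Lemma measurable_density : measurable_fun setT density.
Proof.
apply: measurable_fun_ifT; last exact: measurable_cst.
- by apply: measurable_fun_ler; [exact: measurable_cst|exact: measurable_id].
- by apply: measurable_funM; [exact: measurable_pre_density|exact: measurable_cst].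
Qed.

Lemma density_on_nonneg_density : density_on_nonneg density.
Proof.
split; [exact: measurable_density|split; [exact: density_ge0|split]].
  by move=> x x0; rewrite /density ifF//; apply/negbTE; rewrite -ltNge.
transitivity (\int[mu]_(x in `[0%R, +oo[) ((mass^-1)%:E * (pre_density x)%:E))%E.
  apply: eq_integral => x; rewrite inE/= in_itv/= andbT => x0.
  by rewrite densityE// mulrC EFinM.
rewrite ge0_integralZl//.
- by rewrite integral_pre_density -EFinM mulVf// gt_eqF// mass_gt0.
- exact: measurable_EFin_pre_density.
- by move=> x _; rewrite lee_fin ltW// pre_density_gt0.
- by rewrite lee_fin invr_ge0 ltW// mass_gt0.
Qed.

Lemma density_window_ge (k : nat) z : 0 <= z ->
  4 / 9 * level k <= z + 1 <= level k -> (level k ^+ 2 * mass)^-1 <= density z.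
Proof.
move=> z0 zk; have /andP[_ hi] := zk; have m0 := mass_gt0.
rewrite densityE// (pre_density_window z0 zk) invfM.
apply: ler_wpM2r; first by rewrite invr_ge0 ltW.
by rewrite lef_pV2 ?posrE ?exprn_gt0 ?ler_pXn2r ?nnegrE//; lra.
Qed.

Lemma density_peak_le (k : nat) :
  density (3 / 2 * level k - 1) <= (level k ^+ 4 * mass)^-1.
Proof.
have q1 := level_ge1 k; have m0 := mass_gt0.
rewrite densityE ?pre_density_peak; last lra.
rewrite [X in _ <= X]invfM; apply: ler_wpM2r; first by rewrite invr_ge0 ltW.
by rewrite lef_pV2 ?posrE ?exprn_gt0 ?ler_pXn2r ?nnegrE//; lra.
Qed.

Lemma density_trough_peak (k : nat) :
  density (9 / 4 * level k - 1) / density (3 / 2 * level k - 1) = level k ^+ 2.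
Proof.
have q1 := level_ge1 k; have m0 := mass_gt0.
rewrite !densityE ?pre_density_peak; try lra.
rewrite (@pre_density_window k.+1) ?subrK ?level_S; try lra.
by field; rewrite gt_eqF//; lra.
Qed.

Lemma dist_logp1_shift_le x t : 2 * `|t| <= x ->
  `|logp1 (x + t) - logp1 x| <= 2 * `|t| / (x + 1).
Proof.
move=> xt; have t0 := normr_ge0 t; have tP := ler_norm t.
have := ler_norm (- t); rewrite normrN => tN.
have x0 : 0 <= x by lra.
rewrite !logp1E; try lra.
apply: le_trans (dist_ln_le _ _) _; try lra.
have -> : x + t + 1 - (x + 1) = t by ring.
have min_ge : (x + 1) / 2 <= Num.min (x + t + 1) (x + 1).
  by rewrite le_min; apply/andP; split; lra.
rewrite ler_pdivrMr ?lt_min; last by apply/andP; split; lra.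
by rewrite mulrAC ler_pdivlMr; nra.
Qed.

Lemma dist_decay_shift_le x t : 2 * `|t| <= x ->
  `|decay (logp1 (x + t)) - decay (logp1 x)| <=
  8 * (1 + kappa) * `|t| / Num.sqrt (x + 1).
Proof.
move=> xt; have t0 := normr_ge0 t; have k0 := kappa_gt0.
have x0 : 0 <= x by lra.
set r := Num.sqrt (x + 1).
have r1 : 1 <= r by rewrite -sqrtr1 ler_sqrt; lra.
have rr : r ^+ 2 = x + 1 by rewrite sqr_sqrtr; lra.
have L2r : logp1 x <= 2 * r by rewrite logp1E// ln_le_2sqrt; lra.
have L0 := logp1_ge0 x.
apply: le_trans (dist_decay_le _ L0) _.
apply: le_trans (ler_wpM2l _ (dist_logp1_shift_le xt)) _; first nra.
have -> : 8 * (1 + kappa) * `|t| / r = 8 * (1 + kappa) * `|t| * r / (x + 1).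
  by rewrite -rr; field; rewrite gt_eqF//; lra.
have kt : 0 <= kappa * `|t| by rewrite mulr_ge0// ltW.
by rewrite mulrA ler_wpM2r ?invr_ge0; nra.
Qed.

Lemma decay_shift_cvg0 t :
  (decay (logp1 x) - decay (logp1 (x + t))) @[x --> +oo] --> 0.
Proof.
apply/cvgr0Pnorm_le => e e0; set C := 8 * (1 + kappa) * `|t|.
have C0 : 0 <= C by rewrite !mulr_ge0// addr_ge0// ltW// kappa_gt0.
have Ce0 : 0 <= C / e by rewrite divr_ge0// ltW.
near=> x; have : Num.max (2 * `|t|) ((C / e) ^+ 2) <= x.
  by near: x; exact: nbhs_pinfty_ge (num_real _).
rewrite ge_max => /andP[tx Cx]; have x0 : 0 <= x by rewrite (le_trans _ tx).
rewrite distrC; apply: le_trans (dist_decay_shift_le tx) _.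
rewrite ler_pdivrMr ?sqrtr_gt0; last lra.
rewrite [e * _]mulrC -ler_pdivrMr// -(ger0_norm Ce0) -sqrtr_sqr ler_sqrt; lra.
Unshelve. all: by end_near. Qed.

Lemma long_tailed_density : long_tailed density.
Proof.
split; first by exists 0 => x; exact: density_gt0.
move=> t; apply: cvg_trans (asym_equiv_expR (decay_shift_cvg0 t)).
apply: near_eq_cvg; near=> x; have : Num.max 0 (- t) <= x.
  by near: x; exact: nbhs_pinfty_ge (num_real _).
rewrite ge_max => /andP[x0 xt]; have m0 := mass_gt0.
rewrite /= !densityE /pre_density ?expRN; try lra.
by field; rewrite !gt_eqF ?expR_gt0.
Unshelve. all: by end_near. Qed.

Lemma conv0_peak_ge (k : nat) : 10 <= level k ->
  ((3 * level k / (10 * mass) * density (3 / 2 * level k - 1))%:E <=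
   conv0 density (3 / 2 * level k - 1))%E.
Proof.
move=> q10; have m0 := mass_gt0.
set q := level k in q10 *; set x := 3 / 2 * q - 1.
set a := 3 / 5 * q - 1; set b := 9 / 10 * q - 1.
have window z : 3 / 5 * q <= z + 1 <= q -> (q ^+ 2 * mass)^-1 <= density z.
  move=> /andP[lo hi]; apply: (@density_window_ge k); rewrite -/q; try apply/andP; lra.
have mconv : measurable_fun `[0, x] (fun y => density (x - y) * density y).
  apply: measurable_funTS; apply: measurable_funM; last exact: measurable_density.
  apply: measurableT_comp; first exact: measurable_density.
  by apply: measurable_funB; [exact: measurable_cst|exact: measurable_id].
have m_ge0 : 0 <= (q ^+ 2 * mass)^-1.
  by rewrite invr_ge0 mulr_ge0 ?exprn_ge0// ltW//; lra.
apply: le_trans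
  (@integral_ge_itv_cst _ _ _ a b ((q ^+ 2 * mass)^-1 ^+ 2) _ mconv _ _ _ _ _).
- rewrite lee_fin.
  have -> : (b - a) * (q ^+ 2 * mass)^-1 ^+ 2 = 3 * q / (10 * mass) * (q ^+ 4 * mass)^-1.
    by rewrite /a /b; field; rewrite !gt_eqF//; lra.
  by rewrite ler_wpM2l ?density_peak_le// divr_ge0//; lra.
- by [].
- by move=> y _; rewrite mulr_ge0 ?density_ge0.
- by move=> y; rewrite /= !in_itv/= /a /b /x => /andP[lo hi]; apply/andP; split; lra.
- by rewrite /a /b; lra.
- by rewrite exprn_ge0.
move=> y; rewrite /a /b /x => /andP[lo hi]; rewrite expr2.
by apply: ler_pM => //; apply: window; apply/andP; split; lra.
Qed.

Lemma not_almost_decreasing_density : ~ almost_decreasing density.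
Proof.
move=> [x0 [_ [_ [M ratio_le]]]].
have [k] := exists_level_gt (Num.max (x0 + 1) M).
rewrite gt_max => /andP[x0_lt M_lt]; have q1 := level_ge1 k.
have := ratio_le (3 / 2 * level k - 1) (9 / 4 * level k - 1).
rewrite density_trough_peak expr2 => /(_ _ _); nra.
Qed.

Lemma not_subexponential_density : ~ subexponential density.
Proof.
move=> [_ [conv_fin conv_equiv]].
have conv_lt : \forall x \near +oo, fine (conv0 density x) < 3 / 2 * (2 * density x).
  apply: asym_equiv_lt conv_equiv; first lra.
  apply: filterS (nbhs_pinfty_ge (num_real 0)) => x x0.
  by rewrite mulr_gt0// density_gt0.
have [A [_ conv_A]] := filterI conv_fin conv_lt.
have [k] := exists_level_gt (Num.max (A + 1) (10 * mass + 10)).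
rewrite gt_max => /andP[A_lt mass_lt]; have m0 := mass_gt0.
have [conv_finite conv_small] := conv_A (3 / 2 * level k - 1) ltac:(lra).
have := @conv0_peak_ge k ltac:(lra); rewrite -(fineK conv_finite) lee_fin => conv_large.
have d0 : 0 < density (3 / 2 * level k - 1) by apply: density_gt0; lra.
have : 3 * level k / (10 * mass) < 3.
  by rewrite -(ltr_pM2r d0); apply: le_lt_trans conv_large _; lra.
rewrite ltr_pdivrMr; lra.
Qed.

End Construction.

Theorem proposition1p2 (R : realType) :
  exists f : R -> R,
    density_on_nonneg f /\ long_tailed f /\ ~ subexponential f /\
    ~ almost_decreasing f.
Proof.
exists (@density R); split; first exact: density_on_nonneg_density.
split; first exact: long_tailed_density.
split; first exact: not_subexponential_density.
exact: not_almost_decreasing_density.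
Qed.
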